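(* Let $p,q$ be relatively prime positive integers, and let $\mathcal{T}_{q/p,p/q}$ be the triangle with vertices $(0,0)$, $(p/q,0)$ and $(0,q/p)$. Then $q$ is a quasi-period of the Ehrhart quasipolynomial $I(t)=\#(t\mathcal{T}_{q/p,p/q}\cap\mathbb{Z}^2)$ if and only if \[ p\mid(q^2+1)\qquad\text{and}\qquad \gcd\!\left(\frac{q^2+1}{p},\,p\right)=1. \]
   Context: The Ehrhart function of a rational polygon is a quasipolynomial $\sum_i c_i(t)t^i$ with periodic coefficient functions $c_i$; an integer $q$ is a quasi-period if every $c_i$ is periodic with period $q$. *)

From mathcomp Require Import all_boot all_order all_algebra.
Set Implicit Arguments. Unset Strict Implicit. Unset Printing Implicit Defensive.
Import Order.TTheory GRing.Theory Num.Theory.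
Local Open Scope ring_scope.

Definition in_dil_tri (p q t : nat) (x y : rat) : bool :=
  (0 <= x) && (0 <= y) &&
  (x / (p%:R / q%:R) + y / (q%:R / p%:R) <= t%:R).

(* Ehrhart function I(t) = #(t T ∩ Z^2).  Every lattice point of t T has
   0 <= x <= t*p/q <= p*t and 0 <= y <= t*q/p <= q*t (for p, q >= 1), so it
   suffices to count inside this box. *)
Definition ehrhart_tri (p q t : nat) : nat :=
  (\sum_(x < (p * t).+1) \sum_(y < (q * t).+1)
      (in_dil_tri p q t (x%:R) (y%:R) : nat))%N.

Definition is_quasi_period (f : nat -> nat) (n : nat) : Prop :=
  exists (d : nat) (c : nat -> nat -> rat),
    (forall i t, c i (t + n)%N = c i t) /\
    (forall t, (0 < t)%N -> (f t)%:R = \sum_(i < d) c i t * (t%:R) ^+ i).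

(* Counting column by column, I(t) is the number of (x, y) in N^2 with
   q^2 x + p^2 y <= pqt.  Raising t by q shifts the old columns by p and adds p
   new ones, whence
     p^2 (I(t + q) - I(t)) = p^3 + p^2 q t + q^2 p (p + 1) / 2 - R(q t),
   where R(w) = sum_(k < p) ((p w + (k + 1) q^2) mod p^2) only depends on w mod p.
   If R is constant, I(t + q) - I(t) is affine in t and I is a quadratic
   quasipolynomial of period q.  Conversely, if q is a quasi-period then
   I(p + q s) is a polynomial in s, hence so is R(q (p + q s)); being p-periodic
   in s it is constant, and R is constant since q is invertible mod p.
   Finally R is constant iff q^2 + 1 = c p with gcd(c, p) = 1: averaging R over
   the residues forces p | q^2 + 1, and then
   R(w) = p sum_(k < p) ((w + c - 1 + k c) mod p) + const, which takes different
   values at 0 and 1 as soon as p | (k + 1) c for two different k < p. *)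

From mathcomp Require Import all_boot all_order all_algebra.
From mathcomp Require Import zify ring lra.
Set Implicit Arguments. Unset Strict Implicit. Unset Printing Implicit Defensive.
Import Order.TTheory GRing.Theory Num.Theory.

Lemma sum_ord_narrow (f : nat -> nat) m n : m <= n ->
  (forall x, m <= x -> f x = 0) -> \sum_(x < n) f x = \sum_(x < m) f x.
Proof.
move=> le_mn f0; rewrite -!(big_mkord xpredT) (big_cat_nat (leq0n m) le_mn) /=.
rewrite [X in _ + X]big1_seq ?addn0 // => x /andP[_].
by rewrite mem_index_iota => /andP[/f0].
Qed.

Lemma sum_mul_leq_ord b K m : 0 < b ->
  \sum_(y < m) (b * y <= K : nat) = minn m (K %/ b).+1.
Proof.
move=> b0; elim: m => [|m IH]; first by rewrite big_ord0 min0n.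
rewrite big_ord_recr /= IH.
have -> : (b * m <= K) = (m <= K %/ b) by rewrite leq_divRL // mulnC.
by case: leqP => H; rewrite /minn; case: ifP; case: ifP; lia.
Qed.

Lemma modn_mulD_small p X r : r < p -> (p * X + r) %% (p * p) = p * (X %% p) + r.
Proof.
move=> lt_rp; have -> : p * X + r = X %/ p * (p * p) + (p * (X %% p) + r).
  by rewrite {1}(divn_eq X p); ring.
rewrite modnMDl modn_small //.
have : X %% p < p by rewrite ltn_pmod //; lia.
nia.
Qed.

Lemma modnS_carry p n : 0 < p -> n.+1 %% p + p * (p %| n.+1) = (n %% p).+1.
Proof.
move=> p0; rewrite /dvdn -addn1 -modnDml; have := ltn_pmod n p0.
case: (ltnP (n %% p + 1) p) => [lt_p _ | ge_p lt_p].
- by rewrite modn_small // addn_eq0 andbF muln0; lia.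
- have -> : n %% p + 1 = p by lia.
  by rewrite modnn eqxx; lia.
Qed.

Lemma sum_modn_affine p m c : coprime c p ->
  \sum_(k < p) ((m + k * c) %% p) = \sum_(k < p) k.
Proof.
move=> cop; case: (posnP p) => [->|p0]; first by rewrite !big_ord0.
pose h (k : 'I_p) : 'I_p := Ordinal (ltn_pmod (m + k * c) p0).
suff h_inj : injective h by rewrite [RHS](reindex_inj h_inj).
move=> k1 k2 /(congr1 val) /= /eqP; rewrite eqn_modDl => E; apply/val_inj => /=.
wlog le12 : k1 k2 E / k1 <= k2.
  by move=> W; case: (leqP k1 k2) => [|/ltnW] le; [|symmetry]; apply: W; rewrite // eq_sym.
move: E; rewrite eq_sym eqn_mod_dvd ?leq_mul2r ?le12 ?orbT // -mulnBl.
rewrite Gauss_dvdl ?(coprime_sym p) // => /dvdn_leq.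
by have := ltn_ord k2; case: (posnP (k2 - k1)); lia.
Qed.

Lemma double_sum_ord n : 2 * \sum_(k < n) k + n = n * n.
Proof.
elim: n => [|n IH]; first by rewrite big_ord0.
by rewrite big_ord_recr /=; move: IH; set s := \sum_(i < n) _; nia.
Qed.

Lemma coprime_of_unique_dvd_mul p c : 0 < p ->
  \sum_(k < p) (p %| k.+1 * c : nat) <= 1 -> coprime c p.
Proof.
move=> p0 le1; apply: contraTT le1 => ncop; rewrite -ltnNge.
set g := gcdn c p.
have g_gt1 : 1 < g.
  have : 0 < g by rewrite gcdn_gt0 p0 orbT.
  by move: ncop; rewrite /coprime -/g; case: g => [|[|]].
have gp : g %| p := dvdn_gcdr c p.
have pg_pos : 0 < p %/ g by rewrite divn_gt0 ?(dvdn_leq p0 gp) // ltnW.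
have pg_lt : p %/ g < p by apply: ltn_Pdiv.
have k1_lt : p.-1 < p by rewrite ltn_predL.
have k2_lt : (p %/ g).-1 < p by lia.
pose k1 : 'I_p := Ordinal k1_lt.
pose k2 : 'I_p := Ordinal k2_lt.
have k12 : k2 != k1 by apply/eqP => /(congr1 val) /=; lia.
have dvd_k1 : p %| k1.+1 * c by rewrite /= prednK // dvdn_mulr.
have dvd_k2 : p %| k2.+1 * c.
  rewrite /= prednK // -(divnK (dvdn_gcdl c p)) -/g mulnA (mulnC _ (c %/ g)).
  by rewrite -mulnA divnK // dvdn_mull.
rewrite (bigD1 k1) //= (bigD1 k2) //= dvd_k1 dvd_k2 addnA.
exact: leq_addr.
Qed.

Section QuasiPolynomials.
Local Open Scope ring_scope.

Lemma horner_nat_periodic (R : numDomainType) (P : {poly R}) n : (0 < n)%N ->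
  (forall s : nat, P.[(s + n)%:R] = P.[s%:R]) -> forall s : nat, P.[s%:R] = P.[0].
Proof.
move=> n0 Pper.
have P_mul : forall i : nat, P.[(i * n)%:R] = P.[0].
  by elim=> [|i IH] //; rewrite mulSn addnC Pper.
suff /eqP : P - P.[0]%:P = 0 by rewrite subr_eq0 => /eqP -> s; rewrite !hornerC.
apply: (@roots_geq_poly_eq0 _ _ [seq (i * n)%:R | i <- iota 0 (size (P - P.[0]%:P))]).
- by apply/allP => x /mapP [i _ ->]; rewrite /root !hornerE P_mul subrr.
- by rewrite map_inj_uniq ?iota_uniq // => i j /eqP; rewrite eqr_nat eqn_pmul2r // => /eqP.
- by rewrite size_map size_iota.
Qed.

Lemma quasi_period_progression (f : nat -> nat) n r : is_quasi_period f n ->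
  (0 < r)%N -> exists P : {poly rat}, forall s : nat, (f (r + n * s)%N)%:R = P.[s%:R].
Proof.
move=> [d [c [c_per f_rep]]] r0.
have c_prog : forall i s, c i (r + n * s)%N = c i r.
  move=> i; elim=> [|s IH]; first by rewrite muln0 addn0.
  by rewrite mulnS addnCA [(n + _)%N]addnC c_per.
exists (\sum_(i < d) (c i r)%:P * (r%:R%:P + n%:R%:P * 'X) ^+ i) => s.
rewrite f_rep ?ltn_addr // horner_sum; apply: eq_bigr => i _.
by rewrite !hornerE c_prog natrD natrM.
Qed.

Lemma quasi_period_affine_step (f : nat -> nat) n (a b : rat) : (0 < n)%N ->
  (forall t, (f (t + n)%N)%:R = (f t)%:R + a * t%:R + b) -> is_quasi_period f n.
Proof.
move=> n0 f_step; have nz : n%:R != 0 :> rat by rewrite pnatr_eq0 -lt0n.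
have f_prog : forall r s : nat, (f (r + s * n)%N)%:R =
    (f r)%:R + s%:R * (a * r%:R + b) + a * n%:R * s%:R * (s%:R - 1) / 2.
  move=> r; elim=> [|s IH]; first by rewrite mul0n addn0 mulr0n; field.
  rewrite mulSn addnCA [(n + _)%N]addnC f_step IH.
  by rewrite natrD natrM -addn1 natrD; field.
pose coef (r : nat) : seq rat :=
  let r' := r%:R in let n' := n%:R in
  [:: (f r)%:R - r' * (a * r' + b) / n' + a * r' * (r' + n') / (2 * n');
      (a * r' + b) / n' - a * (2 * r' + n') / (2 * n');
      a / (2 * n')].
exists 3%N, (fun i t => (coef (t %% n)%N)`_i); split=> [i t | t _].
  by rewrite modnDr.
rewrite !big_ord_recr big_ord0 /= add0r.
have t_eq := divn_eq t n; set r := (t %% n)%N; set s := (t %/ n)%N.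
by rewrite t_eq addnC f_prog natrD natrM; field.
Qed.

End QuasiPolynomials.

Lemma in_dil_triE p q t x y : 0 < p -> 0 < q ->
  in_dil_tri p q t x%:R y%:R = (q * q * x + p * p * y <= p * q * t).
Proof.
move=> p0 q0; rewrite /in_dil_tri !ler0n /=.
have pq0 : (0 < (p * q)%:R :> rat)%R by rewrite ltr0n muln_gt0 p0 q0.
have -> : (x%:R / (p%:R / q%:R) + y%:R / (q%:R / p%:R)
          = (q * q * x + p * p * y)%:R / (p * q)%:R :> rat)%R.
  by rewrite !natrD !natrM; field; rewrite !pnatr_eq0 -!lt0n p0 q0.
by rewrite ler_pdivrMr // -natrM ler_nat (mulnC t).
Qed.

Definition lattice_col p q N x :=
  if q * q * x <= N then (N - q * q * x) %/ (p * p) + 1 else 0.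

Definition lattice_count p q N := \sum_(x < N.+1) lattice_col p q N x.

Lemma lattice_col_eq0 p q N x : 0 < q -> N < x -> lattice_col p q N x = 0.
Proof.
move=> q0 lt_Nx; have : 0 < q * q by rewrite muln_gt0 q0.
by rewrite /lattice_col; case: ifP => //; nia.
Qed.

Lemma ehrhart_triE p q t : 0 < p -> 0 < q ->
  ehrhart_tri p q t = lattice_count p q (p * q * t).
Proof.
move=> p0 q0; rewrite /ehrhart_tri /lattice_count.
rewrite (@sum_ord_narrow (lattice_col p q _) (p * t).+1); last 2 first.
- by nia.
- by move=> x lt_x; rewrite /lattice_col; case: ifP => //; nia.
apply: eq_bigr => x _; under eq_bigr do rewrite in_dil_triE //.
rewrite /lattice_col; case: ifP => [le_x | /negbT lt_x]; last first.
  by rewrite big1 // => y _; apply/eqP; rewrite eqb0 -ltnNge; move: lt_x; lia.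
have shift_x y : (q * q * x + p * p * y <= p * q * t)
                 = (p * p * y <= p * q * t - q * q * x) by apply/idP/idP; lia.
under eq_bigr do rewrite shift_x.
rewrite sum_mul_leq_ord ?muln_gt0 ?p0 // addn1 (minn_idPr _) //.
by rewrite ltn_divLR ?muln_gt0 ?p0 //; nia.
Qed.

Lemma lattice_count_shift p q N : 0 < p -> 0 < q ->
  lattice_count p q (N + p * (q * q)) =
  lattice_count p q N + p + \sum_(k < p) ((N + k.+1 * (q * q)) %/ (p * p)).
Proof.
move=> p0 q0; rewrite /lattice_count; set a := q * q; set M := N + p * a.
have a0 : 0 < a by rewrite muln_gt0 q0.
rewrite -(big_mkord xpredT) (big_cat_nat (leq0n p)) /=; last by nia.
have col_shift i : lattice_col p q M (i + p) = lattice_col p q N i.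
  rewrite /lattice_col -/a.
  have -> : (a * (i + p) <= M) = (a * i <= N) by apply/idP/idP; nia.
  by have -> : M - a * (i + p) = N - a * i by nia.
have col_new i : i < p -> lattice_col p q M (p - i.+1) = (N + i.+1 * a) %/ (p * p) + 1.
  move=> lt_ip; rewrite /lattice_col -/a.
  have -> : a * (p - i.+1) <= M by nia.
  by have -> : M - a * (p - i.+1) = N + i.+1 * a by nia.
have := big_addn 0 M.+1 p xpredT (lattice_col p q M); rewrite add0n => ->.
rewrite (eq_bigr _ (fun i _ => col_shift i)) [in X in _ + X = _]big_mkord.
rewrite [in X in _ + X = _](@sum_ord_narrow _ N.+1); last 2 first.
- by nia.
- by move=> x lt_Nx; apply: lattice_col_eq0.
have new_cols : \sum_(i < p) lattice_col p q M i
               = \sum_(k < p) ((N + k.+1 * a) %/ (p * p) + 1).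
  by rewrite (reindex_inj rev_ord_inj); apply: eq_bigr => i _; exact: col_new.
by rewrite big_mkord new_cols big_split /= sum_nat_const card_ord muln1; ring.
Qed.

Definition rem_sum p q w := \sum_(k < p) ((p * w + k.+1 * (q * q)) %% (p * p)).

Lemma ehrhart_tri_shift p q t : 0 < p -> 0 < q ->
  p * p * ehrhart_tri p q (t + q) + rem_sum p q (q * t) =
  p * p * ehrhart_tri p q t + p * p * p + p * p * q * t
    + q * q * \sum_(k < p) k.+1.
Proof.
move=> p0 q0; rewrite !ehrhart_triE //.
rewrite (_ : p * q * (t + q) = p * q * t + p * (q * q)) ?lattice_count_shift //; last by ring.
set N := p * q * t; set D := \sum_(k < p) _ %/ _.
have sum_eq : \sum_(k < p) (N + k.+1 * (q * q)) = p * N + q * q * \sum_(k < p) k.+1.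
  rewrite big_split /= sum_nat_const card_ord big_distrr /= mulnC.
  by congr (_ + _); apply: eq_bigr => k _; rewrite mulnC.
have sum_divmod : \sum_(k < p) (N + k.+1 * (q * q)) = p * p * D + rem_sum p q (q * t).
  rewrite /rem_sum /D big_distrr -big_split /=; apply: eq_bigr => k _.
  by rewrite (mulnA p q t) -/N [LHS](divn_eq _ (p * p)) mulnC.
move: sum_eq sum_divmod; set S := \sum_(k < p) _; set T := \sum_(k < p) k.+1.
rewrite /N; nia.
Qed.

Lemma rem_sum_addMn p q w m : rem_sum p q (w + p * m) = rem_sum p q w.
Proof.
apply: eq_bigr => k _.
have -> : p * (w + p * m) + k.+1 * (q * q) = m * (p * p) + (p * w + k.+1 * (q * q)).
  by ring.
by rewrite modnMDl.
Qed.

Lemma rem_sumE p q c w : 0 < p -> q * q + 1 = c * p ->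
  rem_sum p q w = p * \sum_(k < p) (((w + c).-1 + k * c) %% p) + \sum_(k < p) (p.-1 - k).
Proof.
move=> p0 qqc; have c0 : 0 < c by case: c qqc => //; rewrite mul0n addn1.
rewrite /rem_sum big_distrr -big_split /=; apply: eq_bigr => k _.
have lt_kp := ltn_ord k.
have -> : p * w + k.+1 * (q * q) = p * ((w + c).-1 + k * c) + (p.-1 - k).
  have : k.+1 * (q * q) + k.+1 = k.+1 * c * p by rewrite -mulnA -qqc; ring.
  nia.
by rewrite modn_mulD_small //; lia.
Qed.

Lemma rem_sum_const p q c w : 0 < p -> q * q + 1 = c * p -> coprime c p ->
  rem_sum p q w = rem_sum p q 0.
Proof.
by move=> p0 qqc cop; rewrite !(rem_sumE _ p0 qqc) !(sum_modn_affine _ cop).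
Qed.

Lemma sum_rem_sum p q : 0 < p -> coprime q p ->
  \sum_(u < p) rem_sum p q u = p * p * \sum_(k < p) k + p * \sum_(k < p) k.
Proof.
move=> p0 cop; rewrite /rem_sum exchange_big /=.
have cop2 : coprime (q * q) p by rewrite coprimeMl cop.
have sum_u (k : 'I_p) : \sum_(u < p) ((p * u + k.+1 * (q * q)) %% (p * p))
    = p * \sum_(j < p) j + p * ((k.+1 * (q * q)) %% p).
  set w := k.+1 * (q * q).
  have split_u (u : 'I_p) : (p * u + w) %% (p * p) = p * ((w %/ p + u * 1) %% p) + w %% p.
    by rewrite -modn_mulD_small ?ltn_pmod //; congr (_ %% _); rewrite {1}(divn_eq w p); ring.
  rewrite (eq_bigr _ (fun u _ => split_u u)) big_split /= -big_distrr /=.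
  by rewrite (sum_modn_affine _ (coprime1n p)) sum_nat_const card_ord mulnC.
rewrite (eq_bigr _ (fun k _ => sum_u k)) big_split /= sum_nat_const card_ord -big_distrr /=.
have -> : \sum_(k < p) (k.+1 * (q * q)) %% p = \sum_(k < p) (q * q + k * (q * q)) %% p.
  by apply: eq_bigr => k _; rewrite mulSn.
by rewrite (sum_modn_affine _ cop2); ring.
Qed.

Lemma dvdn_of_rem_sum0 p q : 0 < p -> coprime q p ->
  rem_sum p q 0 = (p + 1) * \sum_(k < p) k -> p %| q * q + 1.
Proof.
move=> p0 cop rem0.
set X := q * q; set S := \sum_(k < p) k; set D := \sum_(k < p) (k.+1 * X %/ (p * p)).
have sum_eq : \sum_(k < p) k.+1 * X = X * (S + p).
  rewrite -big_distrl /=; under eq_bigr do rewrite -addn1.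
  by rewrite big_split /= sum_nat_const card_ord muln1 mulnC.
have sum_divmod : \sum_(k < p) k.+1 * X = p * p * D + rem_sum p q 0.
  rewrite /rem_sum /D big_distrr -big_split /=; apply: eq_bigr => k _.
  by rewrite muln0 add0n [LHS](divn_eq _ (p * p)) mulnC.
have tri := double_sum_ord p; rewrite -/S in tri.
have : p * ((X + 1) * (p + 1)) = p * (p * (2 * D + p + 1)) by nia.
move/eqP; rewrite eqn_pmul2l // => /eqP prod_eq.
have : p %| (X + 1) * (p + 1) by rewrite prod_eq dvdn_mulr.
by rewrite Gauss_dvdl // addn1 coprimenS.
Qed.

Lemma dvdn_of_rem_sum_const p q : 0 < p -> coprime q p ->
  (forall w, rem_sum p q w = rem_sum p q 0) -> p %| q * q + 1.
Proof.
move=> p0 cop rem_const; apply: (dvdn_of_rem_sum0 p0 cop).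
have := sum_rem_sum p0 cop; under eq_bigr do rewrite rem_const.
rewrite sum_nat_const card_ord -mulnA -mulnDr => /eqP; rewrite eqn_pmul2l // => /eqP ->.
by rewrite mulnDl mul1n.
Qed.

Lemma coprime_of_rem_sum01 p q c : 0 < p -> q * q + 1 = c * p ->
  rem_sum p q 1 = rem_sum p q 0 -> coprime c p.
Proof.
move=> p0 qqc; have c0 : 0 < c by case: c qqc => //; rewrite mul0n addn1.
rewrite !(rem_sumE _ p0 qqc) => /eqP; rewrite eqn_add2r eqn_pmul2l // => /eqP sums.
apply: (coprime_of_unique_dvd_mul p0).
have carry (k : 'I_p) : ((1 + c).-1 + k * c) %% p + p * (p %| k.+1 * c)
                        = ((0 + c).-1 + k * c) %% p + 1.
  have -> : (1 + c).-1 + k * c = (k.+1 * c).-1.+1 by rewrite mulSn; lia.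
  have -> : (0 + c).-1 + k * c = (k.+1 * c).-1 by rewrite mulSn; lia.
  by rewrite addn1 -modnS_carry // prednK // muln_gt0.
have : \sum_(k < p) (((1 + c).-1 + k * c) %% p + p * (p %| k.+1 * c))
       = \sum_(k < p) (((0 + c).-1 + k * c) %% p + 1).
  by apply: eq_bigr => k _; exact: carry.
rewrite !big_split /= sum_nat_const card_ord muln1 -big_distrr /= sums.
by move/eqP; rewrite eqn_add2l => /eqP pZ; rewrite -(leq_pmul2l p0) pZ muln1.
Qed.

Section QuasiPeriodRemSum.
Local Open Scope ring_scope.

Lemma rem_sum_progression p q : (0 < p)%N -> (0 < q)%N ->
  is_quasi_period (ehrhart_tri p q) q ->
  forall s, rem_sum p q (q * (p + q * s)) = rem_sum p q 0.
Proof.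
move=> p0 q0 qper; have [P P_prog] := quasi_period_progression qper p0.
pose C := (p * p * p + q * q * \sum_(k < p) k.+1)%N.
pose Q : {poly rat} := (p * p)%N%:R%:P * (P - (P \Po ('X + 1))) + C%:R%:P
                        + (p * p * q)%N%:R%:P * (p%:R%:P + q%:R%:P * 'X).
have QE x : Q.[x] = (p * p)%N%:R * (P.[x] - P.[x + 1]) + C%:R
                    + (p * p * q)%N%:R * (p%:R + q%:R * x).
  by rewrite !hornerE horner_comp !hornerE.
have Q_rem s : (rem_sum p q (q * (p + q * s)))%:R = Q.[s%:R].
  have := ehrhart_tri_shift (p + q * s) p0 q0.
  rewrite -addnA -mulnSr => /(congr1 (fun n => n%:R : rat)).
  rewrite QE natr1 -(P_prog s) -(P_prog s.+1) /C !natrD !natrM => shift; lra.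
have Q_per s : Q.[(s + p)%:R] = Q.[s%:R].
  rewrite -!Q_rem; congr (_%:R).
  rewrite (_ : q * (p + q * (s + p)) = q * (p + q * s) + p * (q * q))%N; last by ring.
  exact: rem_sum_addMn.
move=> s; apply/eqP; rewrite -(eqr_nat rat) Q_rem (horner_nat_periodic p0 Q_per).
have := Q_rem 0%N; rewrite mulr0n => <-.
by rewrite muln0 addn0 mulnC -[(p * q)%N]add0n rem_sum_addMn.
Qed.

End QuasiPeriodRemSum.

Lemma rem_sum_const_of_quasi_period p q : 0 < p -> 0 < q -> coprime p q ->
  is_quasi_period (ehrhart_tri p q) q -> forall w, rem_sum p q w = rem_sum p q 0.
Proof.
move=> p0 q0 cop qper w.
have cop2 : coprime (q * q) p by rewrite coprimeMl coprime_sym cop.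
have qq0 : 0 < q * q by rewrite muln_gt0 q0.
have [km kn bezout _] := egcdnP p qq0; rewrite (eqP cop2) in bezout.
rewrite -(rem_sum_progression p0 q0 qper (w * km)).
have -> : q * (p + q * (w * km)) = w + p * (q + w * kn).
  by transitivity (q * p + w * (km * (q * q))); [ring | rewrite bezout; ring].
by rewrite rem_sum_addMn.
Qed.

Lemma quasi_period_of_rem_sum_const p q : 0 < p -> 0 < q ->
  (forall w, rem_sum p q w = rem_sum p q 0) -> is_quasi_period (ehrhart_tri p q) q.
Proof.
move=> p0 q0 rem_const; set I := ehrhart_tri p q.
have step t : I (t + q) + I 0 = I t + I q + q * t.
  have := ehrhart_tri_shift t p0 q0; have := ehrhart_tri_shift 0 p0 q0.
  rewrite (rem_const (q * t)) !muln0 add0n addn0 -/I => shift0 shift.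
  apply/eqP; rewrite -(@eqn_pmul2l (p * p)) ?muln_gt0 ?p0 //; apply/eqP; nia.
apply: (quasi_period_affine_step (a := q%:R) (b := (I q)%:R - (I 0)%:R)%R q0) => t.
have := congr1 (fun n => n%:R : rat) (step t); rewrite !natrD natrM /=.
by move=> step_t; lra.
Qed.

Theorem theorem3p1 (p q : nat) :
  (0 < p)%N -> (0 < q)%N -> coprime p q ->
  (is_quasi_period (ehrhart_tri p q) q <->
   (p %| q ^ 2 + 1)%N /\ coprime ((q ^ 2 + 1) %/ p) p).
Proof.
move=> p0 q0 cop; rewrite -mulnn; split=> [qper | [dvd_p cop_c]].
- have rem_const := rem_sum_const_of_quasi_period p0 q0 cop qper.
  have dvd_p : p %| q * q + 1.
    by apply: (dvdn_of_rem_sum_const p0 _ rem_const); rewrite coprime_sym.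
  split=> //; apply: (coprime_of_rem_sum01 p0 (esym (divnK dvd_p))).
  exact: rem_const.
- apply: (quasi_period_of_rem_sum_const p0 q0) => w.
  exact: rem_sum_const p0 (esym (divnK dvd_p)) cop_c.
Qed.
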